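(* Fix $\epsilon\in(0,\mu)$ and, for $s\in\{1,2,\dots\}$, let $$\kappa(V)=\inf\{k\ge1:\ V_{n+1}\le n(\mu-\epsilon)/s\ \text{for all } n\ge k\}.$$ If $EV_1^q<\infty$ for some $q>2$, then $E\kappa(V)=O(s^{q/(q-1)})$ as $s\to\infty$.
   Context: $(V_n)_{n\ge1}$ are i.i.d. nonnegative random variables (service times; their law does not depend on $s$), and $\mu>0$ is a fixed constant (the mean interarrival time of the base system). $\inf\emptyset=\infty$. *)

From HB Require Import structures.
From mathcomp Require Import all_boot all_order all_algebra.
From mathcomp Require Import all_classical all_reals all_analysis.

Set Implicit Arguments.
Unset Strict Implicit.
Unset Printing Implicit Defensive.

Import Order.TTheory GRing.Theory Num.Theory.
Local Open Scope classical_set_scope.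
Local Open Scope ring_scope.

Definition mutually_independent d (T : measurableType d) (R : realType)
  (P : probability T R) (X : nat -> T -> R) : Prop :=
  forall (I : seq nat) (B : nat -> set R), uniq I ->
    (forall i, i \in I -> measurable (B i)) ->
    P (\bigcap_(i in [set` I]) (X i @^-1` B i)) =
    (\prod_(i <- I) P (X i @^-1` B i))%E.

Definition identically_distributed d (T : measurableType d) (R : realType)
  (P : probability T R) (X : nat -> T -> R) : Prop :=
  forall n (B : set R), measurable B -> P (X n @^-1` B) = P (X 0%N @^-1` B).

Definition iid d (T : measurableType d) (R : realType)
  (P : probability T R) (X : nat -> T -> R) : Prop :=
  (forall n, measurable_fun setT (X n)) /\
  mutually_independent P X /\ identically_distributed P X.

(* Convention: the paper's V_{n+1} is  V n  here (V : nat -> T -> R,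
   V 0 = V_1).  kappa s V w = inf { k >= 1 : forall n >= k,
   V_{n+1} w <= n (mu - eps) / s }, with inf of the empty set = +oo. *)
Definition kappa (R : realType) (T : Type) (mu eps : R) (s : nat)
  (V : nat -> T -> R) (w : T) : \bar R :=
  ereal_inf [set ((k%:R)%:E : \bar R) | k in
    [set k : nat | (1 <= k)%N /\
       forall n : nat, (k <= n)%N -> V n w <= n%:R * (mu - eps) / s%:R]].

From HB Require Import structures.
From mathcomp Require Import all_boot all_order all_algebra.
From mathcomp Require Import all_classical all_reals all_analysis.
From mathcomp Require Import measurable_realfun.
From mathcomp Require Import zify ring lra.
Set Implicit Arguments.
Unset Strict Implicit.
Unset Printing Implicit Defensive.

Import Order.TTheory GRing.Theory Num.Theory.
Local Open Scope classical_set_scope.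
Local Open Scope ring_scope.

(* Fix K >= 1 and write a := (mu - eps) / s.  If V n <= n a for all n > m >= K,
   then kappa <= m + 1, so kappa <= K + 1 + sum_(n >= K) n 1{V n > n a}.  Since
   the V n are identically distributed, the expectation of this series equals
   that of sum_(K <= n < V 0 / a) n <= 2 (V 0 / a)^q / K^(q-2).  Hence
   E kappa <= K + 1 + 2 (s / (mu - eps))^q E[V 0 ^ q] / K^(q-2), and K of order
   s^(q/(q-1)) balances the two terms since then s^q / K^(q-2) is of order K. *)

Lemma nneseries_ge_term (R : realType) (u : (\bar R)^nat) n :
  (forall k, (0 <= u k)%E) -> (u n <= \sum_(k <oo) u k)%E.
Proof.
move=> u0; rewrite (@nneseriesD1 _ _ n)//.
by rewrite leeDl// nneseries_ge0.
Qed.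

Lemma nneseries_le_ub (R : realType) (u : (\bar R)^nat) (B : \bar R) :
  (forall n, (0 <= u n)%E) -> (forall N, (\sum_(0 <= n < N) u n <= B)%E) ->
  (\sum_(n <oo) u n <= B)%E.
Proof.
move=> u0 uB; apply: lime_le; first exact: is_cvg_ereal_nneg_natsum.
exact: nearW.
Qed.

(* No measurability is assumed: kappa is never shown to be measurable. *)
Lemma ge0_le_integralT d (T : measurableType d) (R : realType)
    (mu : {measure set T -> \bar R}) (g h : T -> \bar R) :
  (forall x, 0 <= g x)%E -> (forall x, g x <= h x)%E ->
  (\int[mu]_x g x <= \int[mu]_x h x)%E.
Proof.
move=> g0 gh; have h0 x : (0 <= h x)%E by apply: le_trans (g0 x) (gh x).
rewrite !ge0_integralTE//; apply: ereal_sup_le => _ [s sg <-].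
by exists s => //= x; apply: le_trans (sg x) (gh x).
Qed.

Lemma powR_ratio_le (R : realType) (x y q : R) : 0 < y -> y <= x -> 2 <= q ->
  y `^ (q - 1) / x `^ (q - 2) <= y.
Proof.
move=> y0 yx q2; have x0 : 0 < x by exact: lt_le_trans yx.
rewrite ler_pdivrMr ?powR_gt0// (_ : q - 1 = 1 + (q - 2)); last by ring.
rewrite [y `^ _]powRD; last by apply/implyP => _; rewrite gt_eqF.
rewrite powRr1 ?(ltW y0)// ler_wpM2l ?(ltW y0)//.
rewrite ge0_ler_powR ?nnegrE ?(ltW y0) ?(ltW x0)//; lra.
Qed.

Definition exceedance_weight (R : realType) (a : R) (K n : nat) (v : R) : R :=
  ((K <= n)%N)%:R * n%:R * ((n%:R * a < v)%R)%:R.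

Lemma exceedance_weight_ge0 (R : realType) (a : R) K n v :
  0 <= exceedance_weight a K n v.
Proof. by rewrite !mulr_ge0. Qed.

Lemma count_lt_mul_le (R : realType) (a v : R) N : 0 < a -> 0 <= v ->
  \sum_(0 <= n < N) ((n%:R * a < v)%R)%:R <= v / a + 1.
Proof.
move=> a0 v0; elim: N => [|N IH].
  by rewrite big_nil; have := divr_ge0 v0 (ltW a0); lra.
rewrite big_nat_recr//=; case: ltP => [Nv|_] /=; last by rewrite addr0.
have : N%:R < v / a by rewrite ltr_pdivlMr.
have : \sum_(0 <= n < N) ((n%:R * a < v)%R)%:R <= N%:R :> R.
  have -> : N%:R = \sum_(0 <= n < N) 1 :> R by rewrite sumr_const_nat subn0.
  by apply: ler_sum => n _; case: (_ < _).
lra.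
Qed.

Lemma sum_exceedance_weight_le (R : realType) (a v q : R) K N :
  0 < a -> 0 <= v -> 2 <= q -> (1 <= K)%N ->
  \sum_(0 <= n < N) exceedance_weight a K n v <= 2 * (v / a) `^ q / K%:R `^ (q - 2).
Proof.
move=> a0 v0 q2 K1; set z := v / a.
have z0 : 0 <= z by rewrite divr_ge0 // ltW.
have K0 : 0 < K%:R :> R by rewrite ltr0n.
have ltz n : (n%:R * a < v) = (n%:R < z) by rewrite ltr_pdivlMr.
have [zK|Kz] := leP z K%:R.
  rewrite big1 ?divr_ge0 ?mulr_ge0 ?powR_ge0// => n _.
  rewrite /exceedance_weight ltz; case: leqP => Kn; last by rewrite !mul0r.
  by rewrite ltNge (le_trans zK) ?ler_nat// mulr0.
have z1 : 1 <= z by rewrite (le_trans _ (ltW Kz)) ?ler1n.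
have sum_le_z_count : \sum_(0 <= n < N) exceedance_weight a K n v
    <= z * \sum_(0 <= n < N) ((n%:R * a < v)%R)%:R.
  rewrite mulr_sumr; apply: ler_sum => n _; rewrite /exceedance_weight ltz.
  case: ltP => nz; rewrite ?mulr0 ?mulr1 //.
  by case: leqP; rewrite ?mul0r ?mul1r // ltW.
have z2_le : 2 * z ^+ 2 <= 2 * z `^ q / K%:R `^ (q - 2).
  rewrite -mulrA ler_wpM2l// ler_pdivlMr ?powR_gt0//.
  have -> : z `^ q = z `^ 2%:R * z `^ (q - 2).
    rewrite -powRD ?subrKC//.
    by apply/implyP => _; rewrite gt_eqF // (lt_le_trans ltr01).
  rewrite powR_mulrn// ler_wpM2l ?exprn_ge0//.
  by rewrite ge0_ler_powR ?nnegrE ?(ltW K0) ?(ltW Kz)//; lra.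
apply: le_trans z2_le; apply: le_trans sum_le_z_count _.
have := ler_wpM2l z0 (count_lt_mul_le N a0 v0); rewrite -/z; nra.
Qed.

Lemma kappa_le_exceedance_series (R : realType) (T : Type) (mu eps : R) (s : nat)
    (V : nat -> T -> R) (w : T) K : (1 <= K)%N ->
  (kappa mu eps s V w <= K.+1%:R%:E
     + \sum_(n <oo) (exceedance_weight ((mu - eps) / s%:R) K n (V n w))%:E)%E.
Proof.
move=> K1; set S := (\sum_(n <oo) _)%E.
have u0 n : (0 <= (exceedance_weight ((mu - eps) / s%:R) K n (V n w))%:E)%E.
  by rewrite lee_fin exceedance_weight_ge0.
have S0 : (0 <= S)%E by apply: nneseries_ge0.
have [->|Sfin] : S = +oo%E \/ S \is a fin_num.
  by case: (S) S0 => [r _|_|]; [right|left|].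
  by rewrite addey ?leey.
set t := Num.truncn (fine S).
have tS : t%:R <= fine S by rewrite truncn_le fine_ge0.
apply: (@le_trans _ _ (K + t.+1)%:R%:E); last first.
  by rewrite -(fineK Sfin) -EFinD lee_fin natrD -addn1 natrD; lra.
apply: ereal_inf_lbound; exists (K + t.+1)%N => //; split; first lia.
move=> n Kn; rewrite leNgt -mulrA; apply/negP => exceed.
have := nneseries_ge_term n u0; rewrite -/S -(fineK Sfin) lee_fin.
rewrite /exceedance_weight exceed (_ : (K <= n)%N); last lia.
rewrite mul1r mulr1 -(truncn_ge_nat _ (fine_ge0 S0)) -/t.
lia.
Qed.

Lemma exceedance_weight_indic (R : realType) (T : Type) (f : T -> R) a K n w :
  exceedance_weight a K n (f w) =
  ((K <= n)%N)%:R * n%:R * \1_(f @^-1` `]n%:R * a, +oo[) w.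
Proof.
rewrite /exceedance_weight indicE.
have -> : (w \in f @^-1` `]n%:R * a, +oo[) = (n%:R * a < f w).
  by apply/idP/idP; rewrite inE/= in_itv/= andbT.
by [].
Qed.

Section exceedance_weight_integral.
Context d (T : measurableType d) (R : realType).
Implicit Types (f : T -> R) (a : R) (K n : nat).

Lemma measurable_exceedance_weight f a K n : measurable_fun setT f ->
  measurable_fun setT (fun w => exceedance_weight a K n (f w)).
Proof.
move=> mf; under eq_fun do rewrite exceedance_weight_indic.
apply: measurable_funM => //; apply: measurable_indic.
by rewrite -[X in measurable X]setTI; apply: mf.
Qed.

Lemma integral_exceedance_weight (mu : {measure set T -> \bar R}) f a K n :
  measurable_fun setT f ->
  (\int[mu]_w (exceedance_weight a K n (f w))%:E =
   (((K <= n)%N)%:R * n%:R)%:E * mu (f @^-1` `](n%:R * a)%R, +oo[))%E.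
Proof.
move=> mf; have mA : measurable (f @^-1` `]n%:R * a, +oo[).
  by rewrite -[X in measurable X]setTI; apply: mf.
under eq_integral do rewrite exceedance_weight_indic EFinM.
rewrite ge0_integralZl_EFin ?integral_indic ?setIT ?mulr_ge0//.
by apply/measurable_EFinP; exact: measurable_indic.
Qed.

Lemma integral_exceedance_series_le (mu : {measure set T -> \bar R}) f a q K :
  0 < a -> 2 <= q -> (1 <= K)%N -> (forall w, 0 <= f w) -> measurable_fun setT f ->
  (\int[mu]_w \sum_(n <oo) (exceedance_weight a K n (f w))%:E <=
   (2 * a^-1 `^ q / K%:R `^ (q - 2))%:E * \int[mu]_w (f w `^ q)%:E)%E.
Proof.
move=> a0 q2 K1 f0 mf.
have c0 : 0 <= 2 * a^-1 `^ q / K%:R `^ (q - 2) by rewrite !mulr_ge0 ?powR_ge0.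
rewrite -ge0_integralZl_EFin//; last 2 first.
- by move=> w _; rewrite lee_fin powR_ge0.
- by apply/measurable_EFinP; exact: (measurableT_comp (measurable_powR q) mf).
apply: ge0_le_integralT => w.
  by apply: nneseries_ge0 => n _ _; rewrite lee_fin exceedance_weight_ge0.
apply: nneseries_le_ub => [n|N]; first by rewrite lee_fin exceedance_weight_ge0.
rewrite sumEFin lee_fin (le_trans (sum_exceedance_weight_le N a0 (f0 w) q2 K1))//.
rewrite powRM ?f0 ?invr_ge0 ?(ltW a0)// le_eqVlt; apply/orP; left; apply/eqP; ring.
Qed.

End exceedance_weight_integral.

Lemma kappa_ge0 (R : realType) (T : Type) (mu eps : R) (s : nat) (V : nat -> T -> R) w :
  (0 <= kappa mu eps s V w)%E.
Proof. by apply: le_ereal_inf_tmp => _ [k _ <-]; rewrite lee_fin. Qed.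

Lemma identically_distributed_integral_exceedance_weight d (T : measurableType d)
    (R : realType) (P : probability T R) (V : nat -> T -> R) a K n :
  (forall n, measurable_fun setT (V n)) -> identically_distributed P V ->
  (\int[P]_w (exceedance_weight a K n (V n w))%:E =
   \int[P]_w (exceedance_weight a K n (V 0%N w))%:E)%E.
Proof.
move=> mV idV; rewrite !integral_exceedance_weight//.
by congr (_ * _)%E; apply: idV; exact: measurable_itv.
Qed.

Section kappa_expectation.
Context d (T : measurableType d) (R : realType) (P : probability T R).
Variables (V : nat -> T -> R) (mu eps q : R) (s K : nat).
Hypothesis mV : forall n, measurable_fun setT (V n).
Hypothesis idV : identically_distributed P V.
Hypothesis V_ge0 : forall n w, 0 <= V n w.
Hypothesis eps_lt_mu : eps < mu.
Hypothesis q_ge2 : 2 <= q.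
Hypothesis s_ge1 : (1 <= s)%N.
Hypothesis K_ge1 : (1 <= K)%N.

Let a := (mu - eps) / s%:R.

Let a_gt0 : 0 < a.
Proof. by rewrite divr_gt0 ?subr_gt0 ?ltr0n. Qed.

Let weight_ge0 n w : (0 <= (exceedance_weight a K n (V n w))%:E)%E.
Proof. by rewrite lee_fin exceedance_weight_ge0. Qed.

Let measurable_weight n :
  measurable_fun setT (fun w => (exceedance_weight a K n (V n w))%:E).
Proof. by apply/measurable_EFinP; exact: measurable_exceedance_weight. Qed.

Lemma expectation_kappa_le :
  (\int[P]_w kappa mu eps s V w <=
   K.+1%:R%:E + (2 * (s%:R / (mu - eps)) `^ q / K%:R `^ (q - 2))%:E *
                \int[P]_w (V 0%N w `^ q)%:E)%E.
Proof.
have Eseries_le : (\int[P]_w \sum_(n <oo) (exceedance_weight a K n (V n w))%:E <=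
    (2 * (s%:R / (mu - eps)) `^ q / K%:R `^ (q - 2))%:E *
    \int[P]_w (V 0%N w `^ q)%:E)%E.
  rewrite integral_nneseries//.
  under eq_eseriesr do rewrite identically_distributed_integral_exceedance_weight//.
  rewrite -integral_nneseries//; last 2 first.
  - by move=> n; apply/measurable_EFinP; exact: measurable_exceedance_weight.
  - by move=> n w _; rewrite lee_fin exceedance_weight_ge0.
  rewrite -[s%:R / _]invf_div.
  exact: integral_exceedance_series_le a_gt0 q_ge2 K_ge1 (V_ge0 0) (mV 0).
apply: le_trans (leeD2l _ Eseries_le).
rewrite -[X in (X + _)%E]mule1 -(probability_setT P) -integral_cst//.
rewrite -ge0_integralD//; last 3 first.
- by move=> w _; rewrite lee_fin.
- by move=> w _; apply: nneseries_ge0.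
- by apply: ge0_emeasurable_sum => // n w _ _.
apply: ge0_le_integralT => w; first exact: kappa_ge0.
exact: kappa_le_exceedance_series.
Qed.

End kappa_expectation.

Theorem mainTheorem11 (d : measure_display) (T : measurableType d)
  (R : realType) (P : probability T R) (V : nat -> T -> R)
  (mu eps q : R) :
  iid P V ->
  (forall n w, 0 <= V n w) ->
  0 < mu -> 0 < eps -> eps < mu ->
  2 < q ->
  (\int[P]_w ((V 0%N w) `^ q)%:E < +oo)%E ->
  exists (C : R) (S : nat), forall s : nat, (S <= s)%N -> (1 <= s)%N ->
    (\int[P]_w kappa mu eps s V w <= (C * (s%:R `^ (q / (q - 1))))%:E)%E.
Proof.
move=> [mV [_ idV]] V_ge0 _ _ eps_lt_mu q_gt2 Vq_lty.
have Vq_ge0 : (0 <= \int[P]_w ((V 0%N w) `^ q)%:E)%E.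
  by apply: integral_ge0 => w _; rewrite lee_fin powR_ge0.
set M := fine (\int[P]_w ((V 0%N w) `^ q)%:E).
have M_ge0 : 0 <= M by rewrite fine_ge0.
have VqE : (\int[P]_w ((V 0%N w) `^ q)%:E)%E = M%:E.
  by rewrite fineK// ge0_fin_numE.
set c := (mu - eps)^-1 `^ q; have c_ge0 : 0 <= c by rewrite powR_ge0.
exists (3 + 2 * c * M), 1%N => s _ s_ge1.
set y := s%:R `^ (q / (q - 1)).
have y_ge1 : 1 <= y.
  by rewrite /y -[leLHS](powRr0 s%:R) ler_powR ?ler1n// divr_ge0//; lra.
set K := (Num.truncn y).+1.
have yK : y <= K%:R by rewrite ltW// truncnS_gt.
have Ky : K%:R <= y + 1 by rewrite -natr1 lerD2r truncn_le; lra.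
have sqE : s%:R `^ q = y `^ (q - 1) by rewrite -powRrM mulfVK//; lra.
have ratio_le := powR_ratio_le (lt_le_trans ltr01 y_ge1) yK (ltW q_gt2).
have K_ge1 : (1 <= K)%N by [].
apply: le_trans (expectation_kappa_le mV idV V_ge0 eps_lt_mu (ltW q_gt2) s_ge1 K_ge1) _.
rewrite VqE -EFinM -EFinD lee_fin powRM ?invr_ge0 ?subr_ge0 ?(ltW eps_lt_mu)//.
rewrite -/c sqE.
have cM_ge0 : 0 <= 2 * c * M by rewrite !mulr_ge0.
have := ler_wpM2l cM_ge0 ratio_le.
rewrite -natr1; nra.
Qed.
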